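(* Let $f(t)=\sum_{n=1}^{\infty}t^{n}/n^{n}=t\int_0^1 x^{-tx}\,dx$. Then, as $t\to+\infty$, $$f(t)=\sqrt{\frac{2\pi t}{e}}\left(1-\frac{e}{24t}+O(t^{-2})\right)\exp\frac{t}{e}.$$
   Context: $x^{-tx}=\exp(-tx\ln x)$ for $x\in(0,1]$. *)

From Stdlib Require Import Reals.
From Coquelicot Require Import Coquelicot.
Open Scope R_scope.

(* n-th term (n >= 1, shifted index k = n-1) of f(t) = sum_{n>=1} t^n / n^n *)
Definition fterm (t : R) (k : nat) : R := t ^ (S k) / (INR (S k)) ^ (S k).

Definition fser (t : R) : R := Series (fterm t).

(* x^{-tx} := exp(-t x ln x) on (0,1]; at x = 0 Stdlib's ln 0 = 0 gives the
   continuous extension value 1 (a single point does not affect the integral). *)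
Definition integrand (t x : R) : R := exp (- t * x * ln x).

(* Expanding x^(-tx) = exp (-t x ln x) in powers of t and integrating term by term with
   int_0^1 x^k (ln x)^k dx = (-1)^k k! / (k+1)^(k+1) gives f(t) = t int_0^1 x^(-tx) dx.

   For the asymptotics substitute x = (1+y)/e and put L = t/e: then
   f(t) = L e^L int_(-1)^(e-1) e^(-L h(y)) dy with h(y) = (1+y) ln(1+y) - y.
   Since h >= 1/10 when |y| >= 1/2, the integral over |y| >= 1/2 is O(e^(-L/10)).
   On [0, 1/2] pair y with -y: from h(y) = y^2/2 - y^3/6 + y^4/12 - ... the even part of h
   contributes the factor 1 - L y^4/12 and the odd part, through cosh, the factor
   1 + L^2 y^6/72, up to O(L^-2 e^(-L y^2/6)).  The resulting main term
   2 e^(-L y^2/2) (1 - L y^4/12 + L^2 y^6/72) has an explicit antiderivative correction, which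
   turns its integral into (1 - 1/(24 L)) int e^(-L y^2/2) plus an exponentially small boundary
   term.  Finally int_0^x e^(-s^2) ds = sqrt(pi)/2 + O(e^(-x^2)), by the classical identity
   (int_0^x e^(-s^2) ds)^2 + int_0^1 e^(-x^2 (1+s^2)) / (1+s^2) ds = pi/4. *)

From Stdlib Require Import Reals Lra Lia Factorial.
From Coquelicot Require Import Coquelicot.
Open Scope R_scope.

(* Coquelicot states these facts for integrands with values in any normed module, in terms of
   [scal], [plus] and [opp]; restated with the field operations of [R] and with equalities at
   type [R], they can be used by [rewrite] and combined by [lra] and [field]. *)

Lemma ex_RInt_continuous_R (f : R -> R) (a b : R) :
  (forall x, Rmin a b <= x <= Rmax a b -> continuous f x) -> ex_RInt f a b.
Proof. exact (ex_RInt_continuous f a b). Qed.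

Lemma ex_RInt_ex_derive (f : R -> R) (a b : R) :
  (forall x, Rmin a b <= x <= Rmax a b -> ex_derive f x) -> ex_RInt f a b.
Proof.
intros Hf. apply ex_RInt_continuous_R. intros x Hx. exact (ex_derive_continuous f x (Hf x Hx)).
Qed.

Lemma RInt_ext_R (f g : R -> R) (a b : R) :
  (forall x, Rmin a b < x < Rmax a b -> f x = g x) -> RInt f a b = RInt g a b :> R.
Proof. exact (RInt_ext f g a b). Qed.

Lemma RInt_const_R (a b c : R) : RInt (fun _ => c) a b = (b - a) * c :> R.
Proof. exact (RInt_const a b c). Qed.

Lemma ex_RInt_scal_R (f : R -> R) (a b l : R) :
  ex_RInt f a b -> ex_RInt (fun x => l * f x) a b.
Proof. exact (ex_RInt_scal f a b l). Qed.

Lemma RInt_scal_R (f : R -> R) (a b l : R) :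
  ex_RInt f a b -> RInt (fun x => l * f x) a b = l * RInt f a b :> R.
Proof. exact (RInt_scal f a b l). Qed.

Lemma RInt_plus_R (f g : R -> R) (a b : R) : ex_RInt f a b -> ex_RInt g a b ->
  RInt (fun x => f x + g x) a b = RInt f a b + RInt g a b :> R.
Proof. exact (RInt_plus f g a b). Qed.

Lemma RInt_minus_R (f g : R -> R) (a b : R) : ex_RInt f a b -> ex_RInt g a b ->
  RInt (fun x => f x - g x) a b = RInt f a b - RInt g a b :> R.
Proof. exact (RInt_minus f g a b). Qed.

Lemma RInt_Chasles_R (f : R -> R) (a b c : R) : ex_RInt f a b -> ex_RInt f b c ->
  RInt f a b + RInt f b c = RInt f a c.
Proof. exact (RInt_Chasles f a b c). Qed.

Lemma RInt_swap_R (f : R -> R) (a b : R) : ex_RInt f a b -> RInt f b a = - RInt f a b :> R.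
Proof. intros Hf. symmetry. exact (opp_RInt_swap f a b Hf). Qed.

Lemma RInt_comp_lin_R (f : R -> R) (u v a b : R) : ex_RInt f (u * a + v) (u * b + v) ->
  RInt (fun y => u * f (u * y + v)) a b = RInt f (u * a + v) (u * b + v) :> R.
Proof. exact (RInt_comp_lin f u v a b). Qed.

Lemma RInt_reflect (f : R -> R) (b : R) : ex_RInt f (- b) 0 -> ex_RInt (fun y => f (- y)) 0 b ->
  RInt (fun y => f (- y)) 0 b = RInt f (- b) 0 :> R.
Proof.
intros Hf Hfo.
assert (Hf' : ex_RInt f 0 (- b)) by now apply (ex_RInt_swap (V := R_NormedModule)).
pose proof (RInt_comp_lin_R f (-1) 0 0 b) as Hc.
replace (-1 * 0 + 0) with 0 in Hc by ring. replace (-1 * b + 0) with (- b) in Hc by ring.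
rewrite (RInt_swap_R f 0 (- b) Hf'), <- (Hc Hf').
rewrite (RInt_ext_R (fun y => -1 * f (-1 * y + 0)) (fun y => -1 * f (- y)))
  by (intros; do 2 f_equal; ring).
rewrite (RInt_scal_R (fun y => f (- y))) by easy.
lra.
Qed.

Lemma RInt_derive_R (f df : R -> R) (a b : R) :
  (forall x, Rmin a b <= x <= Rmax a b -> is_derive f x (df x)) ->
  (forall x, Rmin a b <= x <= Rmax a b -> continuous df x) ->
  RInt df a b = f b - f a :> R.
Proof. intros Hf Hdf. exact (is_RInt_unique _ _ _ _ (is_RInt_derive f df a b Hf Hdf)). Qed.

Lemma exp_le (x y : R) : x <= y -> exp x <= exp y.
Proof.
intros [Hlt | ->]; [now left; apply exp_increasing | apply Rle_refl].
Qed.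

Lemma le_of_derive_le (F G dF dG : R -> R) (a b : R) :
  a <= b ->
  (forall x, a <= x <= b -> is_derive F x (dF x)) ->
  (forall x, a <= x <= b -> is_derive G x (dG x)) ->
  (forall x, a <= x <= b -> dF x <= dG x) ->
  F a <= G a -> F b <= G b.
Proof.
intros Hab HF HG Hd Ha.
assert (HD : forall x, a <= x <= b -> is_derive (fun x => G x - F x) x (dG x - dF x)).
{ intros x Hx. apply (is_derive_minus G F); auto. }
destruct (MVT_gen (fun x => G x - F x) a b (fun x => dG x - dF x)) as [c [Hc Hm]].
- intros x Hx. rewrite Rmin_left, Rmax_right in Hx by lra. apply HD; lra.
- intros x Hx. rewrite Rmin_left, Rmax_right in Hx by lra.
  apply continuity_pt_filterlim, (ex_derive_continuous (fun x => G x - F x)).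
  eexists. apply HD; lra.
- rewrite Rmin_left, Rmax_right in Hc by lra.
  specialize (Hd c Hc). nra.
Qed.

Lemma ln_le_sub_1 (x : R) : 0 < x -> ln x <= x - 1.
Proof.
intros Hx. rewrite <- (ln_exp (x - 1)). apply ln_le; [easy |].
pose proof (exp_ineq1_le (x - 1)). lra.
Qed.

Lemma exp_neg_expansion (z : R) : 0 <= z -> 0 <= exp (- z) - 1 + z <= z ^ 2 / 2.
Proof.
intros Hz. split; [pose proof (exp_ineq1_le (- z)); lra |].
enough (exp (- z) - 1 + z <= z ^ 2 / 2) by lra.
apply (le_of_derive_le (fun x => exp (- x) - 1 + x) (fun x => x ^ 2 / 2)
  (fun x => 1 - exp (- x)) (fun x => x) 0 z); [lra | | | |].
- intros x _. auto_derive; [easy | ring].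
- intros x _. auto_derive; [easy | field].
- intros x _. pose proof (exp_ineq1_le (- x)). lra.
- rewrite Ropp_0, exp_0. lra.
Qed.

Definition exp_partial (v : R) (N : nat) : R := sum_f_R0 (fun k => v ^ k / INR (fact k)) N.

Lemma Derive_n_exp_scal (c : R) (n : nat) (x : R) :
  Derive_n (fun s => exp (c * s)) n x = c ^ n * exp (c * x).
Proof.
revert x. induction n as [| n IH]; intros x; [simpl; ring |].
simpl. rewrite (Derive_ext _ (fun s => c ^ n * exp (c * s))) by apply IH.
apply is_derive_unique. auto_derive; [easy | ring].
Qed.

Lemma ex_derive_n_exp_scal (c : R) (n : nat) (x : R) : ex_derive_n (fun s => exp (c * s)) n x.
Proof.
destruct n as [| n]; [easy |]. simpl.
apply (ex_derive_ext (fun s => c ^ n * exp (c * s))).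
- intros s. symmetry. apply Derive_n_exp_scal.
- auto_derive. easy.
Qed.

Lemma exp_partial_error_pos (c s : R) (N : nat) : 0 < s -> Rabs c <= 1 ->
  Rabs (exp (c * s) - exp_partial (c * s) N) <= exp s * s ^ S N / INR (fact (S N)).
Proof.
intros Hs Hc.
destruct (Taylor_Lagrange (fun u => exp (c * u)) N 0 s Hs) as [z [Hz E]].
{ intros; apply ex_derive_n_exp_scal. }
assert (Hsum : sum_f_R0 (fun m => (s - 0) ^ m / INR (fact m)
                                  * Derive_n (fun u => exp (c * u)) m 0) N
               = exp_partial (c * s) N).
{ apply sum_eq. intros k _.
  rewrite Derive_n_exp_scal, Rmult_0_r, exp_0, Rminus_0_r, Rpow_mult_distr.
  field. apply INR_fact_neq_0. }
rewrite E, Hsum, Derive_n_exp_scal, Rminus_0_r.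
set (q := s ^ S N / INR (fact (S N))).
replace (exp_partial (c * s) N + q * (c ^ S N * exp (c * z)) - exp_partial (c * s) N)
  with (q * (c ^ S N * exp (c * z))) by ring.
assert (Hcz : Rabs (c ^ S N * exp (c * z)) <= exp s).
{ rewrite Rabs_mult, <- RPow_abs, (Rabs_pos_eq (exp _)) by (apply Rlt_le, exp_pos).
  rewrite <- (Rmult_1_l (exp s)).
  apply Rmult_le_compat; [apply pow_le, Rabs_pos | apply Rlt_le, exp_pos | |].
  - rewrite <- (pow1 (S N)). apply pow_incr. split; [apply Rabs_pos | easy].
  - apply exp_le. apply Rle_trans with (Rabs (c * z)); [apply Rle_abs |].
    rewrite Rabs_mult, (Rabs_pos_eq z) by lra. pose proof (Rabs_pos c). nra. }
assert (Hq : 0 <= q) by (apply Rle_mult_inv_pos; [apply pow_le; lra | apply INR_fact_lt_0]).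
rewrite Rabs_mult, (Rabs_pos_eq q) by easy.
replace (exp s * s ^ S N / INR (fact (S N))) with (q * exp s) by (unfold q, Rdiv; ring).
now apply Rmult_le_compat_l.
Qed.

Lemma exp_partial_error (v : R) (N : nat) :
  Rabs (exp v - exp_partial v N) <= exp (Rabs v) * Rabs v ^ S N / INR (fact (S N)).
Proof.
destruct (Rtotal_order v 0) as [Hv | [Hv | Hv]].
- replace v with (-1 * Rabs v) at 1 2 by (rewrite Rabs_left by lra; ring).
  apply exp_partial_error_pos; [apply Rabs_pos_lt; lra | rewrite Rabs_m1; lra].
- subst v. rewrite Rabs_R0, pow_i, Rmult_0_r by lia. unfold Rdiv. rewrite Rmult_0_l.
  unfold exp_partial. rewrite exp_0.
  replace (sum_f_R0 (fun k => 0 ^ k / INR (fact k)) N) with 1.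
  + rewrite Rminus_diag, Rabs_R0. lra.
  + induction N as [| N IH]; [simpl; field |]. simpl. rewrite <- IH. unfold Rdiv. ring.
- replace v with (1 * Rabs v) at 1 2 by (rewrite Rabs_pos_eq by lra; ring).
  apply exp_partial_error_pos; [apply Rabs_pos_lt; lra | rewrite Rabs_R1; lra].
Qed.

Lemma exp_partial_error_le (v b : R) (N : nat) : Rabs v <= b ->
  Rabs (exp v - exp_partial v N) <= exp b * b ^ S N / INR (fact (S N)).
Proof.
intros Hvb. eapply Rle_trans; [apply exp_partial_error |].
assert (Hf : 0 < / INR (fact (S N))) by apply Rinv_0_lt_compat, INR_fact_lt_0.
unfold Rdiv. apply Rmult_le_compat_r; [lra |].
apply Rmult_le_compat; [apply Rlt_le, exp_pos | apply pow_le, Rabs_pos | now apply exp_le |].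
apply pow_incr. split; [apply Rabs_pos | easy].
Qed.

Lemma exp_partial_3 (v : R) : exp_partial v 3 = 1 + v + v ^ 2 / 2 + v ^ 3 / 6.
Proof. unfold exp_partial. simpl. field. Qed.

Lemma cosh_expansion (v : R) : Rabs (exp v + exp (- v) - 2 - v ^ 2) <= exp (Rabs v) * v ^ 4 / 12.
Proof.
assert (Hv4 : Rabs v ^ S 3 = v ^ 4) by (rewrite RPow_abs; apply Rabs_pos_eq; nra).
assert (H24 : INR (fact (S 3)) = 24) by (simpl; ring).
pose proof (exp_partial_error_le v (Rabs v) 3 (Rle_refl _)) as Hp.
pose proof (exp_partial_error_le (- v) (Rabs v) 3 ltac:(rewrite Rabs_Ropp; lra)) as Hm.
rewrite exp_partial_3, Hv4, H24 in Hp, Hm.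
replace (exp v + exp (- v) - 2 - v ^ 2) with
  ((exp v - (1 + v + v ^ 2 / 2 + v ^ 3 / 6))
   + (exp (- v) - (1 + - v + (- v) ^ 2 / 2 + (- v) ^ 3 / 6))) by field.
eapply Rle_trans; [apply Rabs_triang | lra].
Qed.

Lemma pow_mul_exp_neg_le_fact (j : nat) (x : R) : 0 <= x -> x ^ j * exp (- x) <= INR (fact j).
Proof.
intros Hx. assert (Hf : 0 < INR (fact j)) by apply INR_fact_lt_0.
assert (Hterm : x ^ j / INR (fact j) <= exp x).
{ eapply Rle_trans; [| apply (exp_ge_taylor x j Hx)].
  destruct j as [| j]; [simpl; lra |]. rewrite tech5.
  enough (0 <= sum_f_R0 (fun k => x ^ k / INR (fact k)) j) by lra.
  apply cond_pos_sum. intros k. apply Rle_mult_inv_pos; [now apply pow_le | apply INR_fact_lt_0]. }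
rewrite exp_Ropp. pose proof (exp_pos x).
apply (Rmult_le_reg_r (exp x / INR (fact j))); [apply Rdiv_lt_0_compat; lra |].
replace (x ^ j * / exp x * (exp x / INR (fact j))) with (x ^ j / INR (fact j)) by (field; lra).
replace (INR (fact j) * (exp x / INR (fact j))) with (exp x) by (field; lra).
exact Hterm.
Qed.

Lemma exp_neg_third_mul_pow_le (j : nat) (w : R) : 0 <= w ->
  exp (- (w / 3)) * w ^ j <= 6 ^ j * INR (fact j) * exp (- (w / 6)).
Proof.
intros Hw.
replace (exp (- (w / 3)) * w ^ j) with (6 ^ j * ((w / 6) ^ j * exp (- (w / 6))) * exp (- (w / 6)))
  by (rewrite <- Rmult_assoc, <- Rpow_mult_distr, Rmult_assoc, <- exp_plus;
      replace (6 * (w / 6)) with w by field;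
      replace (- (w / 6) + - (w / 6)) with (- (w / 3)) by field; ring).
apply Rmult_le_compat_r; [apply Rlt_le, exp_pos |].
apply Rmult_le_compat_l; [apply pow_le; lra |]. apply pow_mul_exp_neg_le_fact. lra.
Qed.

Lemma exp_neg_third_mul_poly_le (w : R) : 0 <= w ->
  exp (- (w / 3)) * (w ^ 3 + w ^ 4 + w ^ 5 + w ^ 6)
  <= (6 ^ 3 * INR (fact 3) + 6 ^ 4 * INR (fact 4) + 6 ^ 5 * INR (fact 5) + 6 ^ 6 * INR (fact 6))
     * exp (- (w / 6)).
Proof.
intros Hw.
pose proof (exp_neg_third_mul_pow_le 3 w Hw). pose proof (exp_neg_third_mul_pow_le 4 w Hw).
pose proof (exp_neg_third_mul_pow_le 5 w Hw). pose proof (exp_neg_third_mul_pow_le 6 w Hw).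
lra.
Qed.

Lemma inv_24_bounds (L : R) : 1 <= L -> 0 < 1 / (24 * L) <= 1 / 24.
Proof.
intros HL. split; [apply Rdiv_lt_0_compat; lra |].
apply Rmult_le_reg_r with (24 * L); [lra | field_simplify; lra].
Qed.

Lemma sqrt_le_self (L : R) : 1 <= L -> 0 < sqrt L <= L.
Proof.
intros HL. split; [apply sqrt_lt_R0; lra |].
pose proof (sqrt_sqrt L ltac:(lra)). pose proof (sqrt_le_1_alt 1 L HL). rewrite sqrt_1 in *. nra.
Qed.

(** * The Poisson rate function *)

Definition poisson_rate (y : R) : R := (1 + y) * ln (1 + y) - y.

Definition rate_taylor (y : R) : R := y ^ 2 / 2 - y ^ 3 / 6 + y ^ 4 / 12 - y ^ 5 / 20.

Lemma poisson_rate_0 : poisson_rate 0 = 0.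
Proof. unfold poisson_rate. rewrite Rplus_0_r, ln_1. ring. Qed.

Lemma is_derive_poisson_rate (y : R) :
  -1 < y -> is_derive poisson_rate y (ln (1 + y)).
Proof. intros Hy. unfold poisson_rate. auto_derive; [lra | field; lra]. Qed.

Lemma is_derive_poisson_rate_opp (y : R) :
  y < 1 -> is_derive (fun z => poisson_rate (- z)) y (- ln (1 - y)).
Proof. intros Hy. unfold poisson_rate, Rminus. auto_derive; [lra | field; lra]. Qed.

Lemma ln_1p_bounds (y : R) : 0 <= y ->
  y - y ^ 2 / 2 + y ^ 3 / 3 - y ^ 4 / 4 <= ln (1 + y) <=
  y - y ^ 2 / 2 + y ^ 3 / 3 - y ^ 4 / 4 + y ^ 5 / 5.
Proof.
intros Hy.
assert (Hd : forall x, 0 <= x <= y -> is_derive (fun x => ln (1 + x)) x (/ (1 + x))).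
{ intros x Hx. auto_derive; [lra | field; lra]. }
assert (H0 : ln (1 + 0) = 0) by now rewrite Rplus_0_r, ln_1.
split.
- apply (le_of_derive_le (fun x => x - x ^ 2 / 2 + x ^ 3 / 3 - x ^ 4 / 4) (fun x => ln (1 + x))
    (fun x => 1 - x + x ^ 2 - x ^ 3) (fun x => / (1 + x)) 0 y); auto.
  + intros x _. auto_derive; [easy | simpl; field].
  + intros x Hx. apply (Rmult_le_reg_r (1 + x)); [lra |].
    rewrite Rinv_l by lra. nra.
  + lra.
- apply (le_of_derive_le (fun x => ln (1 + x))
    (fun x => x - x ^ 2 / 2 + x ^ 3 / 3 - x ^ 4 / 4 + x ^ 5 / 5)
    (fun x => / (1 + x)) (fun x => 1 - x + x ^ 2 - x ^ 3 + x ^ 4) 0 y); auto.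
  + intros x _. auto_derive; [easy | simpl; field].
  + intros x Hx. apply (Rmult_le_reg_r (1 + x)); [lra |].
    rewrite Rinv_l by lra. pose proof (pow_le x 5). nra.
  + lra.
Qed.

Lemma ln_1m_bounds (y : R) : 0 <= y <= 1 / 2 ->
  y + y ^ 2 / 2 + y ^ 3 / 3 + y ^ 4 / 4 + y ^ 5 / 5 <= - ln (1 - y) <=
  y + y ^ 2 / 2 + y ^ 3 / 3 + y ^ 4 / 4 + 2 * y ^ 5 / 5.
Proof.
intros Hy.
assert (Hd : forall x, 0 <= x <= y -> is_derive (fun x => - ln (1 - x)) x (/ (1 - x))).
{ intros x Hx. auto_derive; [lra | field; lra]. }
assert (H0 : - ln (1 - 0) = 0) by now rewrite Rminus_0_r, ln_1, Ropp_0.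
split.
- apply (le_of_derive_le (fun x => x + x ^ 2 / 2 + x ^ 3 / 3 + x ^ 4 / 4 + x ^ 5 / 5)
    (fun x => - ln (1 - x)) (fun x => 1 + x + x ^ 2 + x ^ 3 + x ^ 4) (fun x => / (1 - x)) 0 y);
    auto; try lra.
  + intros x _. auto_derive; [easy | simpl; field].
  + intros x Hx. apply (Rmult_le_reg_r (1 - x)); [lra |].
    rewrite Rinv_l by lra. pose proof (pow_le x 5). nra.
- apply (le_of_derive_le (fun x => - ln (1 - x))
    (fun x => x + x ^ 2 / 2 + x ^ 3 / 3 + x ^ 4 / 4 + 2 * x ^ 5 / 5)
    (fun x => / (1 - x)) (fun x => 1 + x + x ^ 2 + x ^ 3 + 2 * x ^ 4) 0 y); auto; try lra.
  + intros x _. auto_derive; [easy | simpl; field].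
  + intros x Hx. apply (Rmult_le_reg_r (1 - x)); [lra |].
    rewrite Rinv_l by lra. pose proof (pow_le x 4). nra.
Qed.

Lemma poisson_rate_bounds (y : R) : 0 <= y ->
  rate_taylor y <= poisson_rate y <= rate_taylor y + y ^ 6 / 30.
Proof.
intros Hy. unfold rate_taylor.
assert (Hd : forall x, 0 <= x <= y -> is_derive poisson_rate x (ln (1 + x))).
{ intros x Hx. apply is_derive_poisson_rate. lra. }
pose proof poisson_rate_0.
split.
- apply (le_of_derive_le (fun x => x ^ 2 / 2 - x ^ 3 / 6 + x ^ 4 / 12 - x ^ 5 / 20) poisson_rate
    (fun x => x - x ^ 2 / 2 + x ^ 3 / 3 - x ^ 4 / 4) (fun x => ln (1 + x)) 0 y); auto; try lra.
  + intros x _. auto_derive; [easy | simpl; field].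
  + intros x Hx. apply ln_1p_bounds. lra.
- apply (le_of_derive_le poisson_rate
    (fun x => x ^ 2 / 2 - x ^ 3 / 6 + x ^ 4 / 12 - x ^ 5 / 20 + x ^ 6 / 30) (fun x => ln (1 + x))
    (fun x => x - x ^ 2 / 2 + x ^ 3 / 3 - x ^ 4 / 4 + x ^ 5 / 5) 0 y); auto; try lra.
  + intros x _. auto_derive; [easy | simpl; field].
  + intros x Hx. apply ln_1p_bounds. lra.
Qed.

Lemma poisson_rate_opp_bounds (y : R) : 0 <= y <= 1 / 2 ->
  rate_taylor (- y) + y ^ 6 / 30 <= poisson_rate (- y) <= rate_taylor (- y) + y ^ 6 / 15.
Proof.
intros Hy. unfold rate_taylor.
assert (Hd : forall x, 0 <= x <= y -> is_derive (fun z => poisson_rate (- z)) x (- ln (1 - x))).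
{ intros x Hx. apply is_derive_poisson_rate_opp. lra. }
assert (H0 : poisson_rate (- 0) = 0) by now rewrite Ropp_0, poisson_rate_0.
split.
- apply (le_of_derive_le
    (fun x => (- x) ^ 2 / 2 - (- x) ^ 3 / 6 + (- x) ^ 4 / 12 - (- x) ^ 5 / 20 + x ^ 6 / 30)
    (fun z => poisson_rate (- z)) (fun x => x + x ^ 2 / 2 + x ^ 3 / 3 + x ^ 4 / 4 + x ^ 5 / 5)
    (fun x => - ln (1 - x)) 0 y); auto; try lra.
  + intros x _. auto_derive; [easy | simpl; field].
  + intros x Hx. apply ln_1m_bounds. lra.
- apply (le_of_derive_le (fun z => poisson_rate (- z))
    (fun x => (- x) ^ 2 / 2 - (- x) ^ 3 / 6 + (- x) ^ 4 / 12 - (- x) ^ 5 / 20 + x ^ 6 / 15)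
    (fun x => - ln (1 - x)) (fun x => x + x ^ 2 / 2 + x ^ 3 / 3 + x ^ 4 / 4 + 2 * x ^ 5 / 5) 0 y);
    auto; try lra.
  + intros x _. auto_derive; [easy | simpl; field].
  + intros x Hx. apply ln_1m_bounds. lra.
Qed.

Lemma poisson_rate_ge_tenth (y : R) : -1 < y -> 1 / 2 <= Rabs y -> 1 / 10 <= poisson_rate y.
Proof.
intros Hy1 Hy. destruct (Rle_or_lt 0 y) as [Hpos | Hneg].
- rewrite Rabs_pos_eq in Hy by lra.
  assert (Hhalf := poisson_rate_bounds (1 / 2)). unfold rate_taylor in Hhalf.
  enough (poisson_rate (1 / 2) <= poisson_rate y) by lra.
  apply (le_of_derive_le (fun _ => poisson_rate (1 / 2)) poisson_rate
    (fun _ => 0) (fun x => ln (1 + x)) (1 / 2) y); auto; try lra.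
  + intros x _. auto_derive; easy.
  + intros x Hx. apply is_derive_poisson_rate. lra.
  + intros x Hx. rewrite <- ln_1. apply ln_le; lra.
- rewrite Rabs_left in Hy by lra. rewrite <- (Ropp_involutive y).
  assert (Hhalf := poisson_rate_opp_bounds (1 / 2)). unfold rate_taylor in Hhalf.
  enough (poisson_rate (- (1 / 2)) <= poisson_rate (- - y)) by lra.
  apply (le_of_derive_le (fun _ => poisson_rate (- (1 / 2))) (fun z => poisson_rate (- z))
    (fun _ => 0) (fun x => - ln (1 - x)) (1 / 2) (- y)); auto; try lra.
  + intros x _. auto_derive; easy.
  + intros x Hx. apply is_derive_poisson_rate_opp. lra.
  + intros x Hx. enough (ln (1 - x) <= 0) by lra. rewrite <- ln_1. apply ln_le; lra.
Qed.

Lemma poisson_rate_ge_third_sqr (y : R) : 0 <= y <= 1 / 2 -> y ^ 2 / 3 <= poisson_rate y.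
Proof.
intros Hy. pose proof (poisson_rate_bounds y (proj1 Hy)) as [H _]. unfold rate_taylor in H.
assert (y ^ 3 <= y ^ 2 / 2)
  by (replace (y ^ 3) with (y ^ 2 * y) by ring; pose proof (pow_le y 2); nra).
assert (y ^ 5 <= y ^ 3 / 4)
  by (replace (y ^ 5) with (y ^ 3 * (y * y)) by ring; pose proof (pow_le y 3); nra).
pose proof (pow_le y 4). pose proof (pow_le y 2). lra.
Qed.

Definition rate_even (y : R) : R := (poisson_rate y + poisson_rate (- y)) / 2 - y ^ 2 / 2.

Definition rate_odd (y : R) : R := (poisson_rate y - poisson_rate (- y)) / 2.

Lemma rate_even_odd_bounds (y : R) : 0 <= y <= 1 / 2 ->
  y ^ 4 / 12 + y ^ 6 / 60 <= rate_even y <= y ^ 4 / 12 + y ^ 6 / 20 /\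
  - y ^ 3 / 6 - y ^ 5 / 20 - y ^ 6 / 30 <= rate_odd y <= - y ^ 3 / 6 - y ^ 5 / 20.
Proof.
intros Hy. unfold rate_even, rate_odd.
pose proof (poisson_rate_bounds y (proj1 Hy)). pose proof (poisson_rate_opp_bounds y Hy).
unfold rate_taylor in *.
replace ((- y) ^ 2) with (y ^ 2) in * by ring. replace ((- y) ^ 3) with (- y ^ 3) in * by ring.
replace ((- y) ^ 4) with (y ^ 4) in * by ring. replace ((- y) ^ 5) with (- y ^ 5) in * by ring.
lra.
Qed.

(** * The Gaussian integral *)

Definition gauss (y : R) : R := exp (- (y * y)).

Definition gauss_int (x : R) : R := RInt gauss 0 x.

Definition gauss_companion (x : R) : R :=
  RInt (fun s => exp (- (x * x) * (1 + s * s)) / (1 + s * s)) 0 1.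

Lemma ex_RInt_gauss (a b : R) : ex_RInt gauss a b.
Proof. apply ex_RInt_ex_derive. intros x _. unfold gauss. auto_derive. easy. Qed.

Lemma gauss_int_0 : gauss_int 0 = 0.
Proof. exact (RInt_point 0 gauss). Qed.

Lemma gauss_int_scale (u d : R) : RInt (fun s => u * gauss (u * s)) 0 d = gauss_int (u * d) :> R.
Proof.
pose proof (RInt_comp_lin_R gauss u 0 0 d (ex_RInt_gauss _ _)) as H.
rewrite Rmult_0_r, !Rplus_0_r in H. unfold gauss_int. rewrite <- H.
apply RInt_ext_R. intros s _. now rewrite Rplus_0_r.
Qed.

Lemma RInt_exp_neg_sqr (a d : R) : 0 < a ->
  RInt (fun y => exp (- a * (y * y))) 0 d = gauss_int (sqrt a * d) / sqrt a :> R.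
Proof.
intros Ha. assert (Hs : 0 < sqrt a) by now apply sqrt_lt_R0.
rewrite (RInt_ext_R _ (fun y => / sqrt a * (sqrt a * gauss (sqrt a * y)))).
- rewrite RInt_scal_R, gauss_int_scale; [apply Rmult_comm |].
  apply ex_RInt_ex_derive. intros x _. unfold gauss. auto_derive. easy.
- intros y _. unfold gauss. field_simplify; [| lra]. f_equal.
  replace (sqrt a * y * (sqrt a * y)) with (sqrt a * sqrt a * (y * y)) by ring.
  rewrite sqrt_sqrt; lra.
Qed.

Lemma is_derive_gauss_int (x : R) : is_derive gauss_int x (gauss x).
Proof.
apply (is_derive_RInt (V := R_NormedModule) gauss gauss_int 0 x).
- apply filter_forall. intros b. apply (RInt_correct (V := R_CompleteNormedModule)), ex_RInt_gauss.
- apply (ex_derive_continuous (V := R_NormedModule)). unfold gauss. auto_derive. easy.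
Qed.

Lemma is_derive_gauss_companion (x : R) :
  is_derive gauss_companion x (- 2 * gauss x * gauss_int x).
Proof.
set (f := fun u s => exp (- (u * u) * (1 + s * s)) / (1 + s * s)).
assert (Hpos : forall s, 0 < 1 + s * s) by (intros s; nra).
assert (Hdf : forall u s, Derive (fun z => f z s) u = - 2 * u * exp (- (u * u) * (1 + s * s))).
{ intros u s. apply is_derive_unique. unfold f. auto_derive; [specialize (Hpos s); lra |].
  field. specialize (Hpos s). lra. }
assert (Hint : RInt (fun s => Derive (fun z => f z s) x) 0 1 = - 2 * gauss x * gauss_int x).
{ replace (gauss_int x) with (gauss_int (x * 1)) by now rewrite Rmult_1_r.
  rewrite <- gauss_int_scale.
  rewrite <- RInt_scal_R.
  2: { apply ex_RInt_ex_derive. intros s _. unfold gauss. auto_derive. easy. }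
  apply RInt_ext_R. intros s _. rewrite Hdf. unfold gauss.
  replace (- (x * x) * (1 + s * s)) with (- (x * x) + - (x * s * (x * s))) by ring.
  rewrite exp_plus. ring. }
rewrite <- Hint. unfold gauss_companion. fold (f x).
apply (is_derive_RInt_param f 0 1 x).
- apply filter_forall. intros u s _. unfold f. auto_derive. specialize (Hpos s). lra.
- intros s _. apply (continuity_2d_pt_ext (fun u v => - 2 * u * exp (- (u * u) * (1 + v * v)))).
  { intros u v. now rewrite Hdf. }
  apply continuity_2d_pt_mult.
  + apply continuity_2d_pt_mult; [apply continuity_2d_pt_const | apply continuity_2d_pt_id1].
  + apply continuity_1d_2d_pt_comp; [apply derivable_continuous_pt, derivable_pt_exp |].
    apply continuity_2d_pt_mult.
    * apply continuity_2d_pt_opp, continuity_2d_pt_mult; apply continuity_2d_pt_id1.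
    * apply continuity_2d_pt_plus; [apply continuity_2d_pt_const |].
      apply continuity_2d_pt_mult; apply continuity_2d_pt_id2.
- apply filter_forall. intros u. apply ex_RInt_ex_derive. intros s _.
  unfold f. auto_derive. specialize (Hpos s). lra.
Qed.

Lemma gauss_companion_0 : gauss_companion 0 = PI / 4.
Proof.
unfold gauss_companion.
rewrite (RInt_ext_R _ (fun s => / (1 + s * s))).
2: { intros s _. rewrite Rmult_0_l, Ropp_0, Rmult_0_l, exp_0. unfold Rdiv. ring. }
rewrite (RInt_derive_R atan).
- rewrite atan_1, atan_0. lra.
- intros s _. exact (is_derive_atan s).
- intros s _. apply (ex_derive_continuous (V := R_NormedModule)). auto_derive. nra.
Qed.

Lemma gauss_companion_add_sqr (x : R) : 0 <= x -> gauss_companion x + gauss_int x ^ 2 = PI / 4.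
Proof.
intros Hx.
set (F := fun z => gauss_companion z + gauss_int z ^ 2).
assert (HD : forall z, 0 <= z <= x -> is_derive F z 0).
{ intros z _. unfold F.
  replace 0 with (- 2 * gauss z * gauss_int z + INR 2 * gauss z * gauss_int z ^ Init.Nat.pred 2)
    by (simpl; ring).
  apply (is_derive_plus gauss_companion (fun z => gauss_int z ^ 2)).
  - apply is_derive_gauss_companion.
  - apply is_derive_pow, is_derive_gauss_int. }
assert (HC : forall z, 0 <= z <= x -> is_derive (fun _ => PI / 4) z 0).
{ intros z _. apply (is_derive_const (PI / 4)). }
assert (H0 : F 0 = PI / 4).
{ unfold F. rewrite gauss_companion_0, gauss_int_0. ring. }
apply Rle_antisym.
- apply (le_of_derive_le F (fun _ => PI / 4) (fun _ => 0) (fun _ => 0) 0 x);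
    [lra | exact HD | exact HC | intros; apply Rle_refl | lra].
- apply (le_of_derive_le (fun _ => PI / 4) F (fun _ => 0) (fun _ => 0) 0 x);
    [lra | exact HC | exact HD | intros; apply Rle_refl | lra].
Qed.

Lemma gauss_companion_bounds (x : R) : 0 <= gauss_companion x <= gauss x.
Proof.
unfold gauss_companion.
assert (Hpos : forall s, 0 < 1 + s * s) by (intros s; nra).
assert (Hex : ex_RInt (fun s => exp (- (x * x) * (1 + s * s)) / (1 + s * s)) 0 1).
{ apply ex_RInt_ex_derive. intros s _. auto_derive. specialize (Hpos s). lra. }
split.
- apply RInt_ge_0; auto; [lra |]. intros s _.
  apply Rle_mult_inv_pos; [apply Rlt_le, exp_pos | apply Hpos].
- apply Rle_trans with (RInt (fun _ => gauss x) 0 1); [| rewrite RInt_const_R; lra].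
  apply RInt_le; auto; [lra | apply ex_RInt_ex_derive; intros; auto_derive; easy |].
  intros s _. specialize (Hpos s).
  apply (Rmult_le_reg_r (1 + s * s)); [lra |]. unfold Rdiv.
  rewrite Rmult_assoc, Rinv_l, Rmult_1_r by lra. unfold gauss.
  replace (- (x * x) * (1 + s * s)) with (- (x * x) + - (x * x * (s * s))) by ring.
  rewrite exp_plus.
  assert (exp (- (x * x * (s * s))) <= 1) by (rewrite <- exp_0; apply exp_le; nra).
  pose proof (exp_pos (- (x * x))). nra.
Qed.

Lemma gauss_int_nonneg (x : R) : 0 <= x -> 0 <= gauss_int x.
Proof.
intros Hx. apply RInt_ge_0; auto; [apply ex_RInt_gauss |].
intros y _. apply Rlt_le, exp_pos.
Qed.

Lemma gauss_int_le (x : R) : 0 <= x -> gauss_int x <= sqrt PI / 2.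
Proof.
intros Hx. pose proof (gauss_companion_add_sqr x Hx). pose proof (gauss_companion_bounds x).
pose proof (gauss_int_nonneg x Hx).
assert (Hpi : sqrt PI * sqrt PI = PI) by (apply sqrt_sqrt; pose proof PI_RGT_0; lra).
pose proof (sqrt_pos PI). nra.
Qed.

Lemma gauss_int_tail (x : R) : 0 <= x -> Rabs (gauss_int x - sqrt PI / 2) <= 2 / sqrt PI * gauss x.
Proof.
intros Hx.
assert (Hs : 0 < sqrt PI) by apply sqrt_lt_R0, PI_RGT_0.
assert (Hpi : sqrt PI * sqrt PI = PI) by (apply sqrt_sqrt; pose proof PI_RGT_0; lra).
pose proof (gauss_companion_add_sqr x Hx). pose proof (gauss_companion_bounds x).
pose proof (gauss_int_nonneg x Hx). pose proof (gauss_int_le x Hx).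
rewrite Rabs_left1 by lra.
(* (sqrt PI / 2 - G) (sqrt PI / 2 + G) is the companion integral, which is at most [gauss x] *)
apply (Rmult_le_reg_r (sqrt PI / 2)); [lra |].
replace (2 / sqrt PI * gauss x * (sqrt PI / 2)) with (gauss x) by (field; lra).
nra.
Qed.

(** * The series as an integral *)

Definition xlnx (x : R) : R := x * ln x.

Lemma xlnx_bounds (x : R) : 0 < x <= 1 -> - 2 * sqrt x <= xlnx x <= 0.
Proof.
intros Hx. unfold xlnx.
assert (Hneg : ln x <= 0) by (rewrite <- ln_1; apply ln_le; lra).
split; [| assert (0 <= x * - ln x) by (apply Rmult_le_pos; lra); lra].
set (s := sqrt x).
assert (Hs : 0 < s) by now apply sqrt_lt_R0.
assert (Hss : x = s * s) by (symmetry; apply sqrt_sqrt; lra).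
assert (Hln : ln x = 2 * ln s) by (rewrite Hss, ln_mult by easy; ring).
assert (Hls : 1 - / s <= ln s).
{ pose proof (ln_le_sub_1 (/ s) (Rinv_0_lt_compat _ Hs)). rewrite ln_Rinv in H by easy. lra. }
assert (Hsls : s - 1 <= s * ln s).
{ replace (s - 1) with (s * (1 - / s)) by (field; lra). apply Rmult_le_compat_l; lra. }
rewrite Hln, Hss. nra.
Qed.

Lemma xlnx_abs_le (x : R) : 0 <= x <= 1 -> Rabs (xlnx x) <= 2.
Proof.
intros Hx. destruct (Req_dec x 0) as [-> | Hx0].
- unfold xlnx. rewrite Rmult_0_l, Rabs_R0. lra.
- pose proof (xlnx_bounds x ltac:(lra)).
  assert (sqrt x <= 1) by (rewrite <- sqrt_1; apply sqrt_le_1_alt; lra).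
  rewrite Rabs_left1; lra.
Qed.

Lemma continuous_xlnx (x : R) : 0 <= x -> continuous xlnx x.
Proof.
intros Hx. destruct (Req_dec x 0) as [-> | Hx0].
2: { apply (ex_derive_continuous (V := R_NormedModule)). unfold xlnx. auto_derive. lra. }
apply continuity_pt_filterlim. intros eps Heps.
exists (Rmin 1 (eps / 2 * (eps / 2))). split; [apply Rmin_pos; nra |].
intros y [_ Hy]. simpl in *. unfold R_dist in *. rewrite Rminus_0_r in Hy.
unfold xlnx at 2. rewrite Rmult_0_l, Rminus_0_r.
pose proof (Rmin_l 1 (eps / 2 * (eps / 2))). pose proof (Rmin_r 1 (eps / 2 * (eps / 2))).
pose proof (Rle_abs y).
destruct (Rle_or_lt y 0) as [Hy0 | Hy0].
- (* Stdlib's [ln] vanishes on nonpositive arguments *)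
  unfold xlnx, ln. destruct (Rlt_dec 0 y); [exfalso; lra |]. rewrite Rmult_0_r, Rabs_R0. lra.
- pose proof (xlnx_bounds y ltac:(lra)).
  assert (sqrt y < eps / 2).
  { rewrite <- (sqrt_square (eps / 2)) by lra. apply sqrt_lt_1; nra. }
  rewrite Rabs_left1; lra.
Qed.

Lemma pow_mul_ln_pow (x : R) (k m : nat) : (m <= k)%nat ->
  x ^ k * ln x ^ m = xlnx x ^ m * x ^ (k - m).
Proof.
intros H. unfold xlnx. rewrite Rpow_mult_distr.
replace k with (m + (k - m))%nat at 1 by lia. rewrite pow_add. ring.
Qed.

Lemma continuous_pow_mul_ln_pow (k m : nat) (x : R) : (m <= k)%nat -> 0 <= x ->
  continuous (fun y => y ^ k * ln y ^ m) x.
Proof.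
intros Hmk Hx. apply (continuous_ext (fun y => xlnx y ^ m * y ^ (k - m))).
{ intros y. now rewrite pow_mul_ln_pow. }
apply (continuous_mult (fun y => xlnx y ^ m) (fun y => y ^ (k - m))).
- apply (continuous_comp xlnx (fun z => z ^ m)); [now apply continuous_xlnx |].
  apply (ex_derive_continuous (V := R_NormedModule)). auto_derive. easy.
- apply (ex_derive_continuous (V := R_NormedModule)). auto_derive. easy.
Qed.

Lemma is_derive_mult_id_0 (q : R -> R) : continuous q 0 -> is_derive (fun x => x * q x) 0 (q 0).
Proof.
intros Hq. apply is_derive_Reals. apply continuity_pt_filterlim in Hq.
intros eps Heps. destruct (Hq eps Heps) as [d [Hd Hqd]].
exists (mkposreal d Hd). intros h Hh Hhd. simpl in *.
replace (((0 + h) * q (0 + h) - 0 * q 0) / h - q 0) with (q h - q 0)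
  by (rewrite Rplus_0_l; field; easy).
apply Hqd. split; [split; [easy | now auto] |].
simpl. unfold R_dist. now rewrite Rminus_0_r.
Qed.

Definition log_moment (k m : nat) : R := RInt (fun x => x ^ k * ln x ^ m) 0 1.

Lemma ex_RInt_log_moment (k m : nat) : (m <= k)%nat ->
  ex_RInt (fun x => x ^ k * ln x ^ m) 0 1.
Proof.
intros Hmk. apply ex_RInt_continuous_R. intros x Hx.
rewrite Rmin_left, Rmax_right in Hx by lra. apply continuous_pow_mul_ln_pow; [easy | lra].
Qed.

Lemma log_moment_0 (k : nat) : log_moment k 0 = / INR (S k).
Proof.
assert (Hk : INR (S k) <> 0) by (apply not_0_INR; lia).
unfold log_moment.
rewrite (RInt_derive_R (fun x => / INR (S k) * x ^ S k)).
- rewrite pow1, pow_i by lia. field. easy.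
- intros x _. rewrite pow_O, Rmult_1_r.
  replace (x ^ k) with (/ INR (S k) * (INR (S k) * 1 * x ^ pred (S k))) by (simpl; field; easy).
  apply is_derive_scal, is_derive_pow, (is_derive_id (K := R_AbsRing)).
- intros x Hx. rewrite Rmin_left, Rmax_right in Hx by lra.
  apply continuous_pow_mul_ln_pow; [lia | lra].
Qed.

Lemma is_derive_pow_mul_ln_pow (k m : nat) (x : R) : (S m <= k)%nat -> 0 <= x ->
  is_derive (fun y => y ^ S k * ln y ^ S m) x
    (INR (S k) * (x ^ k * ln x ^ S m) + INR (S m) * (x ^ k * ln x ^ m)).
Proof.
intros Hmk Hx. destruct (Req_dec x 0) as [-> | Hx0].
- apply (is_derive_ext (fun y => y * (xlnx y ^ S m * y ^ (k - S m)))).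
  { intros y. rewrite <- pow_mul_ln_pow by lia. simpl. ring. }
  replace (INR (S k) * (0 ^ k * ln 0 ^ S m) + INR (S m) * (0 ^ k * ln 0 ^ m))
    with (xlnx 0 ^ S m * 0 ^ (k - S m)) by (unfold xlnx; rewrite (pow_i k) by lia; simpl; ring).
  apply is_derive_mult_id_0.
  apply (continuous_ext (fun y => y ^ k * ln y ^ S m)); [intros; apply pow_mul_ln_pow; lia |].
  apply continuous_pow_mul_ln_pow; [easy | lra].
- replace (INR (S k) * (x ^ k * ln x ^ S m) + INR (S m) * (x ^ k * ln x ^ m))
    with (INR (S k) * 1 * x ^ pred (S k) * ln x ^ S m
          + x ^ S k * (INR (S m) * / x * ln x ^ pred (S m))) by (simpl; field; exact Hx0).
  apply (is_derive_mult (fun y => y ^ S k) (fun y => ln y ^ S m)); [| | intros; apply Rmult_comm].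
  + apply is_derive_pow, (is_derive_id (K := R_AbsRing)).
  + apply is_derive_pow, is_derive_ln. lra.
Qed.

Lemma log_moment_S (k m : nat) : (S m <= k)%nat ->
  INR (S k) * log_moment k (S m) + INR (S m) * log_moment k m = 0.
Proof.
intros Hmk.
assert (Hex : forall j, (j <= S m)%nat -> ex_RInt (fun x => x ^ k * ln x ^ j) 0 1).
{ intros j Hj. apply ex_RInt_log_moment. lia. }
assert (Hc : forall j x, (j <= S m)%nat -> 0 <= x -> continuous (fun y => y ^ k * ln y ^ j) x).
{ intros j x Hj Hx. apply continuous_pow_mul_ln_pow; [lia | easy]. }
assert (E : RInt (fun x => INR (S k) * (x ^ k * ln x ^ S m) + INR (S m) * (x ^ k * ln x ^ m)) 0 1
            = 1 ^ S k * ln 1 ^ S m - 0 ^ S k * ln 0 ^ S m).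
{ apply (RInt_derive_R (fun y => y ^ S k * ln y ^ S m)).
  - intros x Hx. rewrite Rmin_left, Rmax_right in Hx by lra.
    apply is_derive_pow_mul_ln_pow; [easy | lra].
  - intros x Hx. rewrite Rmin_left, Rmax_right in Hx by lra.
    apply (continuous_plus (fun y => INR (S k) * (y ^ k * ln y ^ S m))
                           (fun y => INR (S m) * (y ^ k * ln y ^ m)));
      apply (continuous_scal_r (K := R_AbsRing) (V := R_NormedModule)), Hc; lia || lra. }
rewrite RInt_plus_R in E by (apply ex_RInt_scal_R, Hex; lia).
rewrite !RInt_scal_R in E by (apply Hex; lia).
rewrite ln_1, !pow_i in E by lia. unfold log_moment. lra.
Qed.

Lemma log_moment_eq (k m : nat) : (m <= k)%nat ->
  log_moment k m = (-1) ^ m * INR (fact m) / INR (S k) ^ S m.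
Proof.
assert (Hk : INR (S k) <> 0) by (apply not_0_INR; lia).
induction m as [| m IH]; intros Hmk.
- rewrite log_moment_0. simpl. field. easy.
- pose proof (log_moment_S k m Hmk) as Hrec. rewrite IH in Hrec by lia.
  apply (Rmult_eq_reg_l (INR (S k))); [| easy].
  replace (INR (S k) * log_moment k (S m))
    with (- (INR (S m) * ((-1) ^ m * INR (fact m) / INR (S k) ^ S m))) by lra.
  rewrite fact_simpl, mult_INR, <- !tech_pow_Rmult. field. split; [apply pow_nonzero |]; easy.
Qed.

Lemma integrand_eq (t x : R) : integrand t x = exp (- t * xlnx x).
Proof. unfold integrand, xlnx. f_equal. ring. Qed.

Lemma continuous_exp_term (t : R) (k : nat) (x : R) : 0 <= x ->
  continuous (fun y => (- t * xlnx y) ^ k / INR (fact k)) x.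
Proof.
intros Hx. apply (continuous_comp xlnx (fun z => (- t * z) ^ k / INR (fact k))).
- now apply continuous_xlnx.
- apply (ex_derive_continuous (V := R_NormedModule)). auto_derive. easy.
Qed.

Lemma ex_RInt_integrand (t : R) : ex_RInt (integrand t) 0 1.
Proof.
apply ex_RInt_continuous_R. intros x Hx. rewrite Rmin_left, Rmax_right in Hx by lra.
apply (continuous_ext (fun y => exp (- t * xlnx y))); [intros; symmetry; apply integrand_eq |].
apply (continuous_comp xlnx (fun z => exp (- t * z))); [apply continuous_xlnx; lra |].
apply (ex_derive_continuous (V := R_NormedModule)). auto_derive. easy.
Qed.

Lemma RInt_exp_term (t : R) (k : nat) :
  RInt (fun x => (- t * xlnx x) ^ k / INR (fact k)) 0 1 = t ^ k / INR (S k) ^ S k :> R.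
Proof.
assert (Hk : INR (S k) <> 0) by (apply not_0_INR; lia).
assert (Hf := INR_fact_neq_0 k).
assert (Hsign : (-1) ^ k * (-1) ^ k = 1).
{ rewrite <- Rpow_mult_distr. replace (-1 * -1) with 1 by ring. apply pow1. }
rewrite (RInt_ext_R _ (fun x => t ^ k * (-1) ^ k / INR (fact k) * (x ^ k * ln x ^ k))).
2: { intros x _. rewrite pow_mul_ln_pow, Nat.sub_diag by lia.
     replace (- t * xlnx x) with (-1 * t * xlnx x) by ring. rewrite !Rpow_mult_distr.
     simpl pow. field. easy. }
rewrite (RInt_scal_R (fun x => x ^ k * ln x ^ k)) by (apply ex_RInt_log_moment; lia).
fold (log_moment k k). rewrite log_moment_eq by lia.
transitivity (t ^ k * ((-1) ^ k * (-1) ^ k) / INR (S k) ^ S k).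
- field. split; [now apply pow_nonzero | easy].
- now rewrite Hsign, Rmult_1_r.
Qed.

Lemma RInt_exp_partial (t : R) (N : nat) :
  ex_RInt (fun x => exp_partial (- t * xlnx x) N) 0 1 /\
  RInt (fun x => exp_partial (- t * xlnx x) N) 0 1
  = sum_f_R0 (fun k => t ^ k / INR (S k) ^ S k) N :> R.
Proof.
set (u := fun k x => (- t * xlnx x) ^ k / INR (fact k)).
assert (Hex : forall k, ex_RInt (u k) 0 1).
{ intros k. apply ex_RInt_continuous_R. intros x Hx. rewrite Rmin_left, Rmax_right in Hx by lra.
  apply continuous_exp_term. lra. }
induction N as [| N [IHex IH]].
- exact (conj (Hex 0%nat) (RInt_exp_term t 0)).
- change (fun x => exp_partial (- t * xlnx x) (S N))
    with (fun x => exp_partial (- t * xlnx x) N + u (S N) x).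
  rewrite tech5. split.
  + exact (ex_RInt_plus (V := R_NormedModule) _ (u (S N)) 0 1 IHex (Hex (S N))).
  + rewrite (RInt_plus_R _ (u (S N))) by easy. rewrite IH. unfold u. now rewrite RInt_exp_term.
Qed.

Lemma is_series_RInt_integrand (t : R) :
  is_series (fun k => t ^ k / INR (S k) ^ S k) (RInt (integrand t) 0 1).
Proof.
apply is_series_Reals. intros eps Heps.
set (b := 2 * Rabs t). set (B := exp b).
assert (HB : 0 < B) by apply exp_pos.
destruct (cv_speed_pow_fact b (eps / 2 / B)) as [N0 HN0].
{ apply Rlt_gt, Rdiv_lt_0_compat; lra. }
exists N0. intros n Hn.
destruct (RInt_exp_partial t n) as [Hex Heq]. rewrite <- Heq.
unfold Rdist. rewrite Rabs_minus_sym, <- RInt_minus_R by (easy || apply ex_RInt_integrand).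
apply Rle_lt_trans with ((1 - 0) * (B * (b ^ S n / INR (fact (S n))))).
- apply abs_RInt_le_const; [lra | |].
  { apply (ex_RInt_minus (V := R_NormedModule)); [apply ex_RInt_integrand | easy]. }
  intros x Hx. rewrite integrand_eq.
  unfold B. rewrite Rmult_div_assoc. apply exp_partial_error_le.
  unfold b. rewrite Rabs_mult, Rabs_Ropp.
  pose proof (xlnx_abs_le x Hx). pose proof (Rabs_pos t). nra.
- specialize (HN0 (S n) ltac:(lia)). unfold R_dist in HN0. rewrite Rminus_0_r in HN0.
  pose proof (Rle_abs (b ^ S n / INR (fact (S n)))).
  apply Rlt_le_trans with (B * (eps / 2 / B)); [nra |].
  replace (B * (eps / 2 / B)) with (eps / 2) by (field; lra). lra.
Qed.

Lemma is_series_fterm (t : R) : is_series (fterm t) (t * RInt (integrand t) 0 1).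
Proof.
apply (is_series_ext (fun k => scal t (t ^ k / INR (S k) ^ S k))).
- intros n. unfold fterm, scal. simpl. unfold mult. simpl. unfold Rdiv. ring.
- apply (is_series_scal_l (K := R_AbsRing) (V := R_NormedModule)), is_series_RInt_integrand.
Qed.

(** * Reduction to a Laplace integral *)

Definition laplace_kernel (L y : R) : R := exp (- L * poisson_rate y).

Definition laplace_kernel_sym (L y : R) : R := laplace_kernel L y + laplace_kernel L (- y).

Lemma continuous_laplace_kernel (L y : R) : -1 <= y -> continuous (laplace_kernel L) y.
Proof.
intros Hy.
apply (continuous_ext (fun z => exp (- L * (xlnx (1 + z) - z)))); [easy |].
apply (continuous_comp (fun z => xlnx (1 + z) - z) (fun w => exp (- L * w))).
- apply (continuous_minus (fun z => xlnx (1 + z)) (fun z => z)); [| apply continuous_id].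
  apply (continuous_comp (fun z => 1 + z) xlnx).
  + apply (ex_derive_continuous (V := R_NormedModule)). auto_derive. easy.
  + apply continuous_xlnx. lra.
- apply (ex_derive_continuous (V := R_NormedModule)). auto_derive. easy.
Qed.

Lemma ex_RInt_laplace_kernel (L a b : R) : -1 <= a -> -1 <= b -> ex_RInt (laplace_kernel L) a b.
Proof.
intros Ha Hb. apply ex_RInt_continuous_R. intros y Hy. apply continuous_laplace_kernel.
apply Rle_trans with (Rmin a b); [now apply Rmin_glb | easy].
Qed.

Lemma RInt_integrand_subst (t : R) : 0 < t ->
  RInt (integrand t) 0 1
  = / exp 1 * exp (t / exp 1) * RInt (laplace_kernel (t / exp 1)) (-1) (exp 1 - 1) :> R.
Proof.
intros Ht.
assert (He : 2 < exp 1) by (pose proof (exp_ineq1 1 ltac:(lra)); lra).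
set (L := t / exp 1).
assert (Hpt : forall y, -1 < y ->
  / exp 1 * integrand t (/ exp 1 * y + / exp 1) = / exp 1 * exp L * laplace_kernel L y).
{ intros y Hy. rewrite Rmult_assoc. f_equal.
  unfold integrand, laplace_kernel, poisson_rate, L. rewrite <- exp_plus. f_equal.
  replace (/ exp 1 * y + / exp 1) with ((1 + y) / exp 1) by (field; lra).
  rewrite ln_div, ln_exp by lra. field. lra. }
assert (E0 : / exp 1 * -1 + / exp 1 = 0) by (field; lra).
assert (E1 : / exp 1 * (exp 1 - 1) + / exp 1 = 1) by (field; lra).
pose proof (RInt_comp_lin_R (integrand t) (/ exp 1) (/ exp 1) (-1) (exp 1 - 1)) as Hsub.
rewrite E0, E1 in Hsub. rewrite <- Hsub by apply ex_RInt_integrand.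
rewrite <- RInt_scal_R by (apply ex_RInt_laplace_kernel; lra).
apply RInt_ext_R. intros y Hy. rewrite Rmin_left in Hy by lra. apply Hpt. lra.
Qed.

Lemma RInt_laplace_kernel_split (L : R) :
  RInt (laplace_kernel L) (-1) (-1 / 2)
  + RInt (laplace_kernel_sym L) 0 (1 / 2)
  + RInt (laplace_kernel L) (1 / 2) (exp 1 - 1)
  = RInt (laplace_kernel L) (-1) (exp 1 - 1).
Proof.
assert (He : 2 < exp 1) by (pose proof (exp_ineq1 1 ltac:(lra)); lra).
unfold laplace_kernel_sym. set (f := laplace_kernel L).
assert (Hex : forall a b, -1 <= a -> -1 <= b -> ex_RInt f a b) by apply ex_RInt_laplace_kernel.
assert (Hexo : ex_RInt (fun y => f (- y)) 0 (1 / 2)).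
{ apply ex_RInt_continuous_R. intros y Hy. rewrite Rmin_left, Rmax_right in Hy by lra.
  apply (continuous_comp Ropp f).
  { apply (ex_derive_continuous (V := R_NormedModule)). auto_derive. easy. }
  apply continuous_laplace_kernel. lra. }
rewrite (RInt_plus_R f), RInt_reflect by (easy || apply Hex; lra).
rewrite <- (RInt_Chasles_R f (-1) (-1 / 2) (exp 1 - 1)),
  <- (RInt_Chasles_R f (-1 / 2) 0 (exp 1 - 1)), <- (RInt_Chasles_R f 0 (1 / 2) (exp 1 - 1))
  by (apply Hex; lra).
replace (- (1 / 2)) with (-1 / 2) by field. ring.
Qed.

Lemma RInt_laplace_kernel_far (L a b : R) : 0 <= L -> -1 <= a <= b ->
  (forall y, a < y < b -> 1 / 2 <= Rabs y) ->
  0 <= RInt (laplace_kernel L) a b <= (b - a) * exp (- (L / 10)).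
Proof.
intros HL Hab Hfar.
assert (Hex : ex_RInt (laplace_kernel L) a b) by (apply ex_RInt_laplace_kernel; lra).
split.
- apply RInt_ge_0; [lra | easy |]. intros y _. apply Rlt_le, exp_pos.
- rewrite <- RInt_const_R.
  apply RInt_le; [lra | easy | apply ex_RInt_ex_derive; intros; auto_derive; easy |].
  intros y Hy. apply exp_le.
  assert (1 / 10 <= poisson_rate y) by (apply poisson_rate_ge_tenth; [lra | now apply Hfar]).
  nra.
Qed.

Lemma RInt_laplace_kernel_tails (L : R) : 0 <= L ->
  Rabs (RInt (laplace_kernel L) (-1) (-1 / 2) + RInt (laplace_kernel L) (1 / 2) (exp 1 - 1))
  <= 2 * exp (- (L / 10)).
Proof.
intros HL.
assert (He : 2 < exp 1) by (pose proof (exp_ineq1 1 ltac:(lra)); lra). pose proof exp_le_3.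
pose proof (RInt_laplace_kernel_far L (-1) (-1 / 2) HL ltac:(lra)) as Hl.
pose proof (RInt_laplace_kernel_far L (1 / 2) (exp 1 - 1) HL ltac:(lra)) as Hr.
assert (Hexp := exp_pos (- (L / 10))).
rewrite Rabs_pos_eq.
- assert (Hl' : RInt (laplace_kernel L) (-1) (-1 / 2) <= 1 / 2 * exp (- (L / 10))).
  { eapply Rle_trans; [apply Hl | right; field].
    intros y Hy. rewrite Rabs_left by lra. lra. }
  assert (Hr' : RInt (laplace_kernel L) (1 / 2) (exp 1 - 1) <= 3 / 2 * exp (- (L / 10))).
  { eapply Rle_trans; [apply Hr | nra].
    intros y Hy. rewrite Rabs_pos_eq by lra. lra. }
  lra.
- apply Rplus_le_le_0_compat; [apply Hl | apply Hr]; intros y Hy;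
    [rewrite Rabs_left | rewrite Rabs_pos_eq]; lra.
Qed.

Definition O_inv_sqr (f : R -> R) : Prop := exists C, forall L, 1 <= L -> Rabs (f L) <= C / L ^ 2.

Lemma O_inv_sqr_ext (f g : R -> R) :
  (forall L, 1 <= L -> f L = g L) -> O_inv_sqr g -> O_inv_sqr f.
Proof. intros Hfg [C HC]. exists C. intros L HL. rewrite Hfg by easy. now apply HC. Qed.

Lemma O_inv_sqr_le (f g : R -> R) :
  (forall L, 1 <= L -> Rabs (f L) <= g L) -> O_inv_sqr g -> O_inv_sqr f.
Proof.
intros Hfg [C HC]. exists C. intros L HL.
eapply Rle_trans; [now apply Hfg |]. eapply Rle_trans; [apply Rle_abs | now apply HC].
Qed.

Lemma O_inv_sqr_plus (f g : R -> R) :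
  O_inv_sqr f -> O_inv_sqr g -> O_inv_sqr (fun L => f L + g L).
Proof.
intros [C1 H1] [C2 H2]. exists (C1 + C2). intros L HL.
assert (0 < L ^ 2) by (apply pow_lt; lra).
replace ((C1 + C2) / L ^ 2) with (C1 / L ^ 2 + C2 / L ^ 2) by (field; lra).
eapply Rle_trans; [apply Rabs_triang |]. pose proof (H1 L HL). pose proof (H2 L HL). lra.
Qed.

Lemma O_inv_sqr_mult_bounded (h f : R -> R) (B : R) :
  (forall L, 1 <= L -> Rabs (h L) <= B) -> O_inv_sqr f -> O_inv_sqr (fun L => h L * f L).
Proof.
intros Hh [C HC]. exists (B * C). intros L HL.
assert (0 < L ^ 2) by (apply pow_lt; lra).
rewrite Rabs_mult. replace (B * C / L ^ 2) with (B * (C / L ^ 2)) by (field; lra).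
apply Rmult_le_compat; [apply Rabs_pos | apply Rabs_pos | now apply Hh | now apply HC].
Qed.

Lemma O_inv_sqr_pow_mul_exp (j : nat) (c : R) : 0 < c ->
  O_inv_sqr (fun L => L ^ j * exp (- (c * L))).
Proof.
intros Hc. exists (INR (fact (j + 2)) / c ^ (j + 2)). intros L HL.
assert (Hcj : 0 < c ^ (j + 2)) by now apply pow_lt.
assert (HL2 : 0 < L ^ 2) by (apply pow_lt; lra).
pose proof (pow_mul_exp_neg_le_fact (j + 2) (c * L) ltac:(nra)) as H.
rewrite Rabs_pos_eq by (apply Rmult_le_pos; [apply pow_le; lra | apply Rlt_le, exp_pos]).
replace (L ^ j * exp (- (c * L))) with ((c * L) ^ (j + 2) * exp (- (c * L)) / (c ^ (j + 2) * L ^ 2))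
  by (assert (0 < c ^ j) by (now apply pow_lt); rewrite Rpow_mult_distr, !pow_add; field; lra).
replace (INR (fact (j + 2)) / c ^ (j + 2) / L ^ 2) with (INR (fact (j + 2)) / (c ^ (j + 2) * L ^ 2))
  by (field; lra).
unfold Rdiv. apply Rmult_le_compat_r; [apply Rlt_le, Rinv_0_lt_compat, Rmult_lt_0_compat; lra |].
exact H.
Qed.

Lemma laplace_tails_O :
  O_inv_sqr (fun L => sqrt L * (RInt (laplace_kernel L) (-1) (-1 / 2)
                                + RInt (laplace_kernel L) (1 / 2) (exp 1 - 1))).
Proof.
apply (O_inv_sqr_le _ (fun L => 2 * (L ^ 1 * exp (- (1 / 10 * L))))).
- intros L HL. pose proof (sqrt_le_self L HL). pose proof (exp_pos (- (1 / 10 * L))).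
  pose proof (RInt_laplace_kernel_tails L ltac:(lra)) as Htails.
  replace (- (L / 10)) with (- (1 / 10 * L)) in Htails by field.
  rewrite Rabs_mult, Rabs_pos_eq, pow_1 by lra.
  apply Rle_trans with (L * (2 * exp (- (1 / 10 * L)))); [| lra].
  apply Rmult_le_compat; [lra | apply Rabs_pos | lra | easy].
- apply (O_inv_sqr_mult_bounded (fun _ => 2) _ 2); [intros; rewrite Rabs_pos_eq; lra |].
  apply O_inv_sqr_pow_mul_exp. lra.
Qed.

(** * The symmetrised kernel near the saddle point *)

Definition gauss_profile (L y : R) : R := exp (- (L / 2) * (y * y)).

Definition main_profile (L y : R) : R :=
  2 * gauss_profile L y * (1 - L * y ^ 4 / 12 + L ^ 2 * y ^ 6 / 72).

Lemma laplace_kernel_even_odd (L y : R) :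
  laplace_kernel L y = gauss_profile L y * exp (- (L * rate_even y)) * exp (- (L * rate_odd y)) /\
  laplace_kernel L (- y) = gauss_profile L y * exp (- (L * rate_even y)) * exp (L * rate_odd y).
Proof.
unfold laplace_kernel, gauss_profile, rate_even, rate_odd.
split; rewrite <- !exp_plus; f_equal; field.
Qed.

Lemma rate_even_scaled_bounds (L y : R) : 1 <= L -> 0 <= y <= 1 / 2 ->
  Rabs (L * rate_even y - L * y ^ 4 / 12) <= L * y ^ 6 / 20 /\
  0 <= L * rate_even y <= L * y ^ 4 / 6 /\
  0 <= exp (- (L * rate_even y)) - 1 + L * rate_even y <= L ^ 2 * y ^ 8 / 72.
Proof.
intros HL Hy. destruct (rate_even_odd_bounds y Hy) as [He _].
assert (Hp : forall n, 0 <= y ^ n) by (intros; apply pow_le; lra).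
assert (Hyy : y * y <= 1 / 4) by nra.
assert (H64 : y ^ 6 <= y ^ 4 / 4)
  by (replace (y ^ 6) with (y ^ 4 * (y * y)) by ring; pose proof (Hp 4%nat); nra).
assert (Hz : 0 <= L * rate_even y <= L * y ^ 4 / 6) by (pose proof (Hp 4%nat); split; nra).
split; [apply Rabs_le; split; nra |]. split; [easy |].
pose proof (exp_neg_expansion _ (proj1 Hz)) as [Hr0 Hr1]. split; [easy |].
apply Rle_trans with ((L * y ^ 4 / 6) ^ 2 / 2); [| right; field].
enough ((L * rate_even y) ^ 2 <= (L * y ^ 4 / 6) ^ 2) by lra. apply pow_incr. lra.
Qed.

Lemma odd_part_sqr_bounds (L y o : R) : 0 <= y <= 1 / 2 ->
  - y ^ 3 / 6 - y ^ 5 / 20 - y ^ 6 / 30 <= o <= - y ^ 3 / 6 - y ^ 5 / 20 ->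
  Rabs ((L * o) ^ 2 - L ^ 2 * y ^ 6 / 36) <= L ^ 2 * y ^ 8 / 25 /\
  (L * o) ^ 2 <= L ^ 2 * y ^ 6 / 16.
Proof.
intros Hy Ho.
assert (Hp : forall n, 0 <= y ^ n) by (intros; apply pow_le; lra).
assert (Hy2 : y ^ 2 <= 1 / 4) by nra.
assert (H53 : y ^ 5 <= y ^ 3 / 4)
  by (replace (y ^ 5) with (y ^ 3 * y ^ 2) by ring; pose proof (Hp 3%nat); nra).
assert (H65 : y ^ 6 <= y ^ 5 / 2)
  by (replace (y ^ 6) with (y ^ 5 * y) by ring; pose proof (Hp 5%nat); nra).
assert (Hsum : Rabs (o + y ^ 3 / 6) <= y ^ 5 / 10) by (apply Rabs_le; lra).
assert (Hdiff : Rabs (o - y ^ 3 / 6) <= y ^ 3 / 3 + y ^ 5 / 10)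
  by (apply Rabs_le; pose proof (Hp 3%nat); lra).
assert (HL2 : 0 <= L ^ 2) by apply pow2_ge_0.
split.
- replace ((L * o) ^ 2 - L ^ 2 * y ^ 6 / 36)
    with (L ^ 2 * ((o + y ^ 3 / 6) * (o - y ^ 3 / 6))) by field.
  rewrite Rabs_mult, Rabs_mult, (Rabs_pos_eq (L ^ 2)) by easy.
  replace (L ^ 2 * y ^ 8 / 25) with (L ^ 2 * (y ^ 8 / 25)) by field.
  apply Rmult_le_compat_l; [easy |].
  apply Rle_trans with (y ^ 5 / 10 * (y ^ 3 / 3 + y ^ 5 / 10)).
  + apply Rmult_le_compat; [apply Rabs_pos | apply Rabs_pos | easy | easy].
  + assert (y ^ 5 * y ^ 5 <= y ^ 8 / 4)
      by (pose proof (Hp 5%nat); replace (y ^ 8) with (y ^ 3 * y ^ 5) by ring; nra).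
    replace (y ^ 5 / 10 * (y ^ 3 / 3 + y ^ 5 / 10))
      with (y ^ 8 / 30 + y ^ 5 * y ^ 5 / 100) by field.
    pose proof (Hp 8%nat). lra.
- replace ((L * o) ^ 2) with (L ^ 2 * (- o) ^ 2) by ring.
  replace (L ^ 2 * y ^ 6 / 16) with (L ^ 2 * (y ^ 3 / 4) ^ 2) by field.
  apply Rmult_le_compat_l; [easy |]. apply pow_incr. pose proof (Hp 3%nat). lra.
Qed.

Lemma expansion_error_poly (L y z r v : R) : 1 <= L -> 0 <= y <= 1 / 2 ->
  Rabs (z - L * y ^ 4 / 12) <= L * y ^ 6 / 20 -> 0 <= z <= L * y ^ 4 / 6 ->
  0 <= r <= L ^ 2 * y ^ 8 / 72 ->
  Rabs (v ^ 2 - L ^ 2 * y ^ 6 / 36) <= L ^ 2 * y ^ 8 / 25 -> v ^ 2 <= L ^ 2 * y ^ 6 / 16 ->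
  Rabs ((1 - z + r) * (2 + v ^ 2) - 2 * (1 - L * y ^ 4 / 12 + L ^ 2 * y ^ 6 / 72))
  <= L * y ^ 6 / 10 + L ^ 2 * y ^ 8 / 14 + L ^ 3 * y ^ 10 / 96 + L ^ 4 * y ^ 14 / 1152.
Proof.
intros HL Hy Hz1 Hz2 Hr Hv1 Hv2.
replace ((1 - z + r) * (2 + v ^ 2) - 2 * (1 - L * y ^ 4 / 12 + L ^ 2 * y ^ 6 / 72))
  with (- 2 * (z - L * y ^ 4 / 12) + 2 * r + (v ^ 2 - L ^ 2 * y ^ 6 / 36) + (r - z) * v ^ 2)
  by field.
replace (L ^ 3 * y ^ 10 / 96 + L ^ 4 * y ^ 14 / 1152)
  with ((L * y ^ 4 / 6 + L ^ 2 * y ^ 8 / 72) * (L ^ 2 * y ^ 6 / 16)) by field.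
assert (Hv0 : 0 <= v ^ 2) by apply pow2_ge_0.
assert (Hprod : Rabs ((r - z) * v ^ 2)
                <= (L * y ^ 4 / 6 + L ^ 2 * y ^ 8 / 72) * (L ^ 2 * y ^ 6 / 16)).
{ rewrite Rabs_mult, (Rabs_pos_eq (v ^ 2)) by easy.
  apply Rmult_le_compat; [apply Rabs_pos | easy | apply Rabs_le; lra | easy]. }
assert (Hz : Rabs (- 2 * (z - L * y ^ 4 / 12)) <= L * y ^ 6 / 10)
  by (rewrite Rabs_mult, Rabs_left by lra; lra).
assert (Hr2 : Rabs (2 * r) <= L ^ 2 * y ^ 8 / 36) by (rewrite Rabs_pos_eq; lra).
pose proof (Rabs_triang (- 2 * (z - L * y ^ 4 / 12)) (2 * r)).
pose proof (Rabs_triang (- 2 * (z - L * y ^ 4 / 12) + 2 * r) (v ^ 2 - L ^ 2 * y ^ 6 / 36)).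
pose proof (Rabs_triang (- 2 * (z - L * y ^ 4 / 12) + 2 * r + (v ^ 2 - L ^ 2 * y ^ 6 / 36))
  ((r - z) * v ^ 2)).
assert (0 <= L ^ 2 * y ^ 8) by (apply Rmult_le_pos; apply pow_le; lra).
lra.
Qed.

Lemma laplace_kernel_cosh_term_le (L y : R) : 1 <= L -> 0 <= y <= 1 / 2 ->
  gauss_profile L y * exp (- (L * rate_even y))
  * Rabs (exp (L * rate_odd y) + exp (- (L * rate_odd y)) - 2 - (L * rate_odd y) ^ 2)
  <= exp (- (L / 3) * (y * y)) * (L ^ 4 * y ^ 12 / 3072).
Proof.
intros HL Hy.
destruct (rate_even_odd_bounds y Hy) as [_ Hodd].
destruct (odd_part_sqr_bounds L y (rate_odd y) Hy Hodd) as [_ Hv2].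
destruct (laplace_kernel_even_odd L y) as [Hphi _].
set (v := L * rate_odd y) in *. set (g := gauss_profile L y * exp (- (L * rate_even y))) in *.
assert (Hv0 : v <= 0) by (unfold v; pose proof (pow_le y 3); pose proof (pow_le y 5); nra).
assert (Hg0 : 0 < g) by (apply Rmult_lt_0_compat; apply exp_pos).
(* [g exp|v|] is the kernel at [y] itself, which is small since [h(y) >= y^2/3] *)
assert (Hg : 0 < g * exp (Rabs v) <= exp (- (L / 3) * (y * y))).
{ split; [apply Rmult_lt_0_compat; [easy | apply exp_pos] |].
  rewrite Rabs_left1, <- Hphi by easy. unfold laplace_kernel. apply exp_le.
  pose proof (poisson_rate_ge_third_sqr y Hy). nra. }
assert (Hv4 : 0 <= v ^ 4 <= L ^ 4 * y ^ 12 / 256).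
{ replace (v ^ 4) with ((v ^ 2) ^ 2) by ring.
  replace (L ^ 4 * y ^ 12 / 256) with ((L ^ 2 * y ^ 6 / 16) ^ 2) by field.
  split; [apply pow2_ge_0 | apply pow_incr; split; [apply pow2_ge_0 | easy]]. }
apply Rle_trans with (g * exp (Rabs v) * (v ^ 4 / 12)).
- replace (g * exp (Rabs v) * (v ^ 4 / 12)) with (g * (exp (Rabs v) * v ^ 4 / 12)) by field.
  apply Rmult_le_compat_l; [lra | apply cosh_expansion].
- apply Rmult_le_compat; lra.
Qed.

Lemma laplace_kernel_sym_error_poly (L y : R) : 1 <= L -> 0 <= y <= 1 / 2 ->
  Rabs (laplace_kernel_sym L y - main_profile L y)
  <= exp (- (L / 3) * (y * y)) * (L * y ^ 6 / 10 + L ^ 2 * y ^ 8 / 14 + L ^ 3 * y ^ 10 / 96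
                                  + L ^ 4 * y ^ 14 / 1152 + L ^ 4 * y ^ 12 / 3072).
Proof.
intros HL Hy.
destruct (rate_even_odd_bounds y Hy) as [_ Hodd].
destruct (rate_even_scaled_bounds L y HL Hy) as [Hz1 [Hz2 Hr]].
destruct (odd_part_sqr_bounds L y (rate_odd y) Hy Hodd) as [Hv1 Hv2].
destruct (laplace_kernel_even_odd L y) as [Hphi Hphim].
pose proof (laplace_kernel_cosh_term_le L y HL Hy) as Hcosh.
set (z := L * rate_even y) in *. set (v := L * rate_odd y) in *.
set (r := exp (- z) - 1 + z) in *. set (g := gauss_profile L y) in *.
pose proof (expansion_error_poly L y z r v HL Hy Hz1 Hz2 Hr Hv1 Hv2) as Hpoly.
assert (Hg : 0 < g <= exp (- (L / 3) * (y * y))) by (split; [apply exp_pos | apply exp_le; nra]).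
replace (laplace_kernel_sym L y - main_profile L y)
  with (g * ((1 - z + r) * (2 + v ^ 2) - 2 * (1 - L * y ^ 4 / 12 + L ^ 2 * y ^ 6 / 72))
        + g * exp (- z) * (exp v + exp (- v) - 2 - v ^ 2))
  by (unfold laplace_kernel_sym; rewrite Hphi, Hphim; unfold main_profile, r; fold g; ring).
eapply Rle_trans; [apply Rabs_triang |].
assert (Hgz : 0 < g * exp (- z)) by (apply Rmult_lt_0_compat; [lra | apply exp_pos]).
rewrite Rabs_mult, (Rabs_mult (g * exp (- z))), (Rabs_pos_eq g), (Rabs_pos_eq (g * exp (- z)))
  by lra.
assert (Hfirst :
   g * Rabs ((1 - z + r) * (2 + v ^ 2) - 2 * (1 - L * y ^ 4 / 12 + L ^ 2 * y ^ 6 / 72))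
   <= exp (- (L / 3) * (y * y))
      * (L * y ^ 6 / 10 + L ^ 2 * y ^ 8 / 14 + L ^ 3 * y ^ 10 / 96 + L ^ 4 * y ^ 14 / 1152)).
{ apply Rmult_le_compat; [lra | apply Rabs_pos | lra | easy]. }
lra.
Qed.

Lemma sym_error_poly_le (L y : R) : 1 <= L -> 0 <= y <= 1 / 2 ->
  L * y ^ 6 / 10 + L ^ 2 * y ^ 8 / 14 + L ^ 3 * y ^ 10 / 96 + L ^ 4 * y ^ 14 / 1152
  + L ^ 4 * y ^ 12 / 3072
  <= ((L * (y * y)) ^ 3 + (L * (y * y)) ^ 4 + (L * (y * y)) ^ 5 + (L * (y * y)) ^ 6) / L ^ 2.
Proof.
intros HL Hy.
assert (Hy14 : L ^ 4 * y ^ 14 <= L ^ 4 * y ^ 12).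
{ apply Rmult_le_compat_l; [apply pow_le; lra |].
  replace (y ^ 14) with (y ^ 12 * (y * y)) by ring.
  assert (0 <= y ^ 12) by (apply pow_le; lra). assert (y * y <= 1) by nra. nra. }
replace (((L * (y * y)) ^ 3 + (L * (y * y)) ^ 4 + (L * (y * y)) ^ 5 + (L * (y * y)) ^ 6) / L ^ 2)
  with (L * y ^ 6 + L ^ 2 * y ^ 8 + L ^ 3 * y ^ 10 + L ^ 4 * y ^ 12) by (field; lra).
assert (0 <= L * y ^ 6 /\ 0 <= L ^ 2 * y ^ 8 /\ 0 <= L ^ 3 * y ^ 10 /\ 0 <= L ^ 4 * y ^ 12)
  by (repeat split; apply Rmult_le_pos; try apply pow_le; lra).
lra.
Qed.

Lemma laplace_kernel_sym_error : exists K, 0 <= K /\ forall L y, 1 <= L -> 0 <= y <= 1 / 2 ->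
  Rabs (laplace_kernel_sym L y - main_profile L y)
  <= K / L ^ 2 * exp (- (L / 6) * (y * y)).
Proof.
set (K := 6 ^ 3 * INR (fact 3) + 6 ^ 4 * INR (fact 4) + 6 ^ 5 * INR (fact 5)
          + 6 ^ 6 * INR (fact 6)).
exists K. split.
{ assert (Hc : forall j, 0 <= 6 ^ j * INR (fact j))
    by (intros; apply Rmult_le_pos; [apply pow_le; lra | apply pos_INR]).
  unfold K. pose proof (Hc 3%nat). pose proof (Hc 4%nat).
  pose proof (Hc 5%nat). pose proof (Hc 6%nat). lra. }
intros L y HL Hy.
eapply Rle_trans; [now apply laplace_kernel_sym_error_poly |].
set (w := L * (y * y)).
assert (Hw : 0 <= w) by (unfold w; nra).
assert (HL2 : 0 < L ^ 2) by (apply pow_lt; lra).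
replace (exp (- (L / 3) * (y * y))) with (exp (- (w / 3))) by (f_equal; unfold w; field).
replace (exp (- (L / 6) * (y * y))) with (exp (- (w / 6))) by (f_equal; unfold w; field).
pose proof (exp_pos (- (w / 3))).
eapply Rle_trans; [apply Rmult_le_compat_l; [lra | now apply sym_error_poly_le] |].
fold w.
replace (exp (- (w / 3)) * ((w ^ 3 + w ^ 4 + w ^ 5 + w ^ 6) / L ^ 2))
  with (/ L ^ 2 * (exp (- (w / 3)) * (w ^ 3 + w ^ 4 + w ^ 5 + w ^ 6))) by (field; lra).
replace (K / L ^ 2 * exp (- (w / 6))) with (/ L ^ 2 * (K * exp (- (w / 6)))) by (field; lra).
apply Rmult_le_compat_l; [apply Rlt_le, Rinv_0_lt_compat; lra |].
now apply exp_neg_third_mul_poly_le.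
Qed.

Lemma ex_RInt_laplace_kernel_sym (L : R) :
  ex_RInt (laplace_kernel_sym L) 0 (1 / 2).
Proof.
apply ex_RInt_ex_derive. intros y Hy. rewrite Rmin_left, Rmax_right in Hy by lra.
unfold laplace_kernel_sym, laplace_kernel, poisson_rate. auto_derive. lra.
Qed.

Lemma RInt_laplace_kernel_sym_error (K L : R) : 0 <= K -> 1 <= L ->
  (forall y, 0 <= y <= 1 / 2 -> Rabs (laplace_kernel_sym L y - main_profile L y)
                                 <= K / L ^ 2 * exp (- (L / 6) * (y * y))) ->
  Rabs (RInt (laplace_kernel_sym L) 0 (1 / 2)
        - RInt (main_profile L) 0 (1 / 2)) <= K / L ^ 2 * (sqrt PI / 2 / sqrt (L / 6)).
Proof.
intros HK0 HL HK.
set (f := laplace_kernel_sym L).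
set (bound := fun y => K / L ^ 2 * exp (- (L / 6) * (y * y))).
assert (Hf : ex_RInt f 0 (1 / 2)) by apply ex_RInt_laplace_kernel_sym.
assert (Hm : ex_RInt (main_profile L) 0 (1 / 2)).
{ apply ex_RInt_ex_derive. intros. unfold main_profile, gauss_profile. auto_derive. easy. }
assert (Hb : ex_RInt (fun y => exp (- (L / 6) * (y * y))) 0 (1 / 2)).
{ apply ex_RInt_ex_derive. intros. auto_derive. easy. }
assert (Hdiff := ex_RInt_minus (V := R_NormedModule) f (main_profile L) 0 (1 / 2) Hf Hm).
rewrite <- (RInt_minus_R f (main_profile L)) by easy.
eapply Rle_trans; [apply abs_RInt_le; [lra | exact Hdiff] |].
eapply Rle_trans; [apply (RInt_le _ bound); [lra | exact (ex_RInt_norm _ _ _ Hdiff) | | ] |].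
- exact (ex_RInt_scal_R _ 0 (1 / 2) (K / L ^ 2) Hb).
- intros y Hy. apply HK. lra.
- unfold bound. rewrite (RInt_scal_R (fun y => exp (- (L / 6) * (y * y)))), RInt_exp_neg_sqr
    by (lra || easy).
  apply Rmult_le_compat_l; [apply Rle_mult_inv_pos; [easy | apply pow_lt; lra] |].
  unfold Rdiv. apply Rmult_le_compat_r; [apply Rlt_le, Rinv_0_lt_compat, sqrt_lt_R0; lra |].
  apply gauss_int_le. apply Rmult_le_pos; [apply sqrt_pos | lra].
Qed.

Lemma laplace_sym_error_O :
  O_inv_sqr (fun L => sqrt L * (RInt (laplace_kernel_sym L) 0 (1 / 2)
                                - RInt (main_profile L) 0 (1 / 2))).
Proof.
destruct laplace_kernel_sym_error as [K [HK0 HK]].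
exists (K * (sqrt PI / 2) * sqrt 6). intros L HL.
pose proof (sqrt_le_self L HL) as HsL.
rewrite Rabs_mult, (Rabs_pos_eq (sqrt L)) by lra.
eapply Rle_trans.
{ apply Rmult_le_compat_l; [lra |]. apply (RInt_laplace_kernel_sym_error K); [easy | easy |].
  intros y Hy. now apply HK. }
rewrite sqrt_div by lra. right. field.
split; [lra | split; apply Rgt_not_eq, sqrt_lt_R0; lra].
Qed.

(** * Integrating the main term *)

Definition profile_antiderivative (L y : R) : R := y / (24 * L) + y ^ 3 / 72 - L * y ^ 5 / 72.

(* This identity is the source of the correction factor [1 - 1 / (24 L)], i.e. [1 - e / (24 t)]. *)
Lemma is_derive_profile_antiderivative (L y : R) : 0 < L ->
  is_derive (fun z => profile_antiderivative L z * gauss_profile L z) y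
    (/ 2 * main_profile L y - (1 - 1 / (24 * L)) * gauss_profile L y).
Proof.
intros HL. unfold profile_antiderivative, main_profile, gauss_profile.
auto_derive; [lra | field; lra].
Qed.

Lemma RInt_main_profile (L : R) : 0 < L ->
  RInt (main_profile L) 0 (1 / 2)
  = 2 * (1 - 1 / (24 * L)) * RInt (gauss_profile L) 0 (1 / 2)
    + 2 * profile_antiderivative L (1 / 2) * gauss_profile L (1 / 2) :> R.
Proof.
intros HL.
assert (Hg : ex_RInt (gauss_profile L) 0 (1 / 2)).
{ apply ex_RInt_ex_derive. intros. unfold gauss_profile. auto_derive. easy. }
assert (Hm : ex_RInt (main_profile L) 0 (1 / 2)).
{ apply ex_RInt_ex_derive. intros. unfold main_profile, gauss_profile. auto_derive. easy. }
set (c := 1 - 1 / (24 * L)).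
assert (E : RInt (fun y => / 2 * main_profile L y - c * gauss_profile L y) 0 (1 / 2)
  = profile_antiderivative L (1 / 2) * gauss_profile L (1 / 2)
    - profile_antiderivative L 0 * gauss_profile L 0 :> R).
{ apply (RInt_derive_R (fun z => profile_antiderivative L z * gauss_profile L z));
    intros y _; [now apply is_derive_profile_antiderivative |].
  apply (ex_derive_continuous (V := R_NormedModule)).
  unfold main_profile, gauss_profile. auto_derive. easy. }
rewrite RInt_minus_R in E by (apply ex_RInt_scal_R; easy).
rewrite (RInt_scal_R (main_profile L)), (RInt_scal_R (gauss_profile L)) in E by easy.
replace (profile_antiderivative L 0) with 0 in E by (unfold profile_antiderivative; field; lra).
lra.
Qed.

Lemma profile_antiderivative_half_le (L : R) : 1 <= L ->
  Rabs (profile_antiderivative L (1 / 2)) <= L.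
Proof.
intros HL. unfold profile_antiderivative. pose proof (inv_24_bounds L HL).
replace (1 / 2 / (24 * L) + (1 / 2) ^ 3 / 72 - L * (1 / 2) ^ 5 / 72)
  with (1 / 2 * (1 / (24 * L)) + 1 / 576 - L / 2304) by (field; lra).
apply Rabs_le. split; lra.
Qed.

Lemma gauss_profile_half (L : R) : gauss_profile L (1 / 2) = exp (- (1 / 8 * L)).
Proof. unfold gauss_profile. f_equal. field. Qed.

Lemma RInt_gauss_profile_half (L : R) : 0 < L ->
  sqrt L * RInt (gauss_profile L) 0 (1 / 2) = sqrt 2 * gauss_int (sqrt (L / 2) * (1 / 2)).
Proof.
intros HL. unfold gauss_profile. rewrite RInt_exp_neg_sqr by lra.
rewrite sqrt_div by lra. field. split; apply Rgt_not_eq, sqrt_lt_R0; lra.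
Qed.

Lemma gauss_sqrt_half (L : R) : 0 <= L -> gauss (sqrt (L / 2) * (1 / 2)) = exp (- (1 / 8 * L)).
Proof.
intros HL. unfold gauss. f_equal.
replace (sqrt (L / 2) * (1 / 2) * (sqrt (L / 2) * (1 / 2))) with (sqrt (L / 2) * sqrt (L / 2) / 4)
  by field.
rewrite sqrt_sqrt by lra. field.
Qed.

Lemma gauss_int_half_tail_O : O_inv_sqr (fun L => gauss_int (sqrt (L / 2) * (1 / 2)) - sqrt PI / 2).
Proof.
apply (O_inv_sqr_le _ (fun L => 2 / sqrt PI * (L ^ 0 * exp (- (1 / 8 * L))))).
- intros L HL. rewrite pow_O, Rmult_1_l, <- gauss_sqrt_half by lra.
  apply gauss_int_tail. apply Rmult_le_pos; [apply sqrt_pos | lra].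
- apply (O_inv_sqr_mult_bounded (fun _ => 2 / sqrt PI) _ (Rabs (2 / sqrt PI))); [intros; lra |].
  apply O_inv_sqr_pow_mul_exp. lra.
Qed.

Lemma boundary_term_O :
  O_inv_sqr (fun L => sqrt L * profile_antiderivative L (1 / 2) * gauss_profile L (1 / 2)).
Proof.
apply (O_inv_sqr_le _ (fun L => L ^ 2 * exp (- (1 / 8 * L)))).
- intros L HL. pose proof (sqrt_le_self L HL). pose proof (profile_antiderivative_half_le L HL).
  pose proof (exp_pos (- (1 / 8 * L))).
  rewrite gauss_profile_half, !Rabs_mult, (Rabs_pos_eq (sqrt L)), (Rabs_pos_eq (exp _)) by lra.
  replace (L ^ 2) with (L * L) by ring.
  apply Rmult_le_compat_r; [lra |]. apply Rmult_le_compat; [lra | apply Rabs_pos | lra | easy].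
- apply O_inv_sqr_pow_mul_exp. lra.
Qed.

Lemma laplace_middle_decomposition (L : R) : 1 <= L ->
  sqrt L * RInt (laplace_kernel_sym L) 0 (1 / 2)
  - sqrt (2 * PI) * (1 - 1 / (24 * L))
  = sqrt L * (RInt (laplace_kernel_sym L) 0 (1 / 2)
              - RInt (main_profile L) 0 (1 / 2))
    + 2 * sqrt 2 * (1 - 1 / (24 * L)) * (gauss_int (sqrt (L / 2) * (1 / 2)) - sqrt PI / 2)
    + 2 * (sqrt L * profile_antiderivative L (1 / 2) * gauss_profile L (1 / 2)).
Proof.
intros HL. rewrite RInt_main_profile by lra.
rewrite sqrt_mult by (pose proof PI_RGT_0; lra).
pose proof (RInt_gauss_profile_half L ltac:(lra)) as HI.
set (I := RInt (gauss_profile L) 0 (1 / 2) : R) in *.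
apply Rminus_diag_uniq.
transitivity (2 * (1 - 1 / (24 * L)) * (sqrt L * I - sqrt 2 * gauss_int (sqrt (L / 2) * (1 / 2))));
  [field; lra |].
rewrite HI. ring.
Qed.

Lemma laplace_middle_expansion :
  O_inv_sqr (fun L => sqrt L * RInt (laplace_kernel_sym L) 0 (1 / 2)
                      - sqrt (2 * PI) * (1 - 1 / (24 * L))).
Proof.
eapply O_inv_sqr_ext; [intros L HL; now apply laplace_middle_decomposition |].
repeat apply O_inv_sqr_plus.
- exact laplace_sym_error_O.
- apply (O_inv_sqr_mult_bounded (fun L => 2 * sqrt 2 * (1 - 1 / (24 * L))) _ (2 * sqrt 2)).
  + intros L HL. pose proof (inv_24_bounds L HL). pose proof (sqrt_pos 2).
    rewrite Rabs_pos_eq; nra.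
  + exact gauss_int_half_tail_O.
- apply (O_inv_sqr_mult_bounded (fun _ => 2) _ 2); [intros; rewrite Rabs_pos_eq; lra |].
  exact boundary_term_O.
Qed.

Lemma laplace_expansion :
  O_inv_sqr (fun L => sqrt L * RInt (laplace_kernel L) (-1) (exp 1 - 1)
                      - sqrt (2 * PI) * (1 - 1 / (24 * L))).
Proof.
eapply O_inv_sqr_ext; [| exact (O_inv_sqr_plus _ _ laplace_tails_O laplace_middle_expansion)].
intros L _. rewrite <- RInt_laplace_kernel_split. ring.
Qed.

Lemma fser_laplace (t : R) : 0 < t ->
  fser t = t / exp 1 * exp (t / exp 1) * RInt (laplace_kernel (t / exp 1)) (-1) (exp 1 - 1).
Proof.
intros Ht. unfold fser.
rewrite (is_series_unique _ _ (is_series_fterm t)), RInt_integrand_subst by easy.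
field. apply Rgt_not_eq, exp_pos.
Qed.

Definition fser_remainder (t : R) : R :=
  let L := t / exp 1 in
  sqrt L * RInt (laplace_kernel L) (-1) (exp 1 - 1) / sqrt (2 * PI) - (1 - 1 / (24 * L)).

Lemma fser_eq_remainder (t : R) : 0 < t ->
  fser t = sqrt (2 * PI * t / exp 1) * (1 - exp 1 / (24 * t) + fser_remainder t) * exp (t / exp 1).
Proof.
intros Ht. rewrite fser_laplace by easy. unfold fser_remainder.
assert (He : 0 < exp 1) by apply exp_pos.
set (L := t / exp 1). assert (HL : 0 < L) by (unfold L; apply Rdiv_lt_0_compat; lra).
set (J := RInt (laplace_kernel L) (-1) (exp 1 - 1) : R).
replace (2 * PI * t / exp 1) with (2 * PI * L) by (unfold L; field; lra).
replace (exp 1 / (24 * t)) with (1 / (24 * L)) by (unfold L; field; lra).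
rewrite sqrt_mult by (pose proof PI_RGT_0; lra).
replace (L * exp L * J) with (sqrt L * sqrt L * J * exp L) by (rewrite sqrt_sqrt by lra; ring).
assert (0 < sqrt L) by now apply sqrt_lt_R0.
assert (0 < sqrt PI) by apply sqrt_lt_R0, PI_RGT_0.
assert (0 < sqrt (2 * PI)) by (apply sqrt_lt_R0; pose proof PI_RGT_0; lra).
field. lra.
Qed.

Lemma fser_remainder_bound : exists C, forall t, exp 1 < t -> Rabs (fser_remainder t) <= C / t ^ 2.
Proof.
destruct laplace_expansion as [C HC].
assert (He : 0 < exp 1) by apply exp_pos.
assert (Hs : 0 < sqrt (2 * PI)) by (apply sqrt_lt_R0; pose proof PI_RGT_0; lra).
exists (C * exp 1 ^ 2 / sqrt (2 * PI)). intros t Ht. unfold fser_remainder.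
set (L := t / exp 1).
assert (HL : 1 <= L) by (unfold L; apply Rmult_le_reg_r with (exp 1); [lra | field_simplify; lra]).
set (J := RInt (laplace_kernel L) (-1) (exp 1 - 1) : R).
replace (sqrt L * J / sqrt (2 * PI) - (1 - 1 / (24 * L)))
  with ((sqrt L * J - sqrt (2 * PI) * (1 - 1 / (24 * L))) / sqrt (2 * PI)) by (field; lra).
replace (C * exp 1 ^ 2 / sqrt (2 * PI) / t ^ 2) with (C / L ^ 2 / sqrt (2 * PI))
  by (unfold L; field; lra).
unfold Rdiv at 1. rewrite Rabs_mult, Rabs_inv, (Rabs_pos_eq (sqrt _)) by lra.
apply Rmult_le_compat_r; [apply Rlt_le, Rinv_0_lt_compat; lra | now apply HC].
Qed.

Theorem mainTheorem3 :
  (forall t : R, is_series (fterm t) (t * RInt (integrand t) 0 1)) /\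
  (exists C T : R, forall t : R, T < t ->
     exists r : R, Rabs r <= C / t ^ 2 /\
       fser t = sqrt (2 * PI * t / exp 1) * (1 - exp 1 / (24 * t) + r) * exp (t / exp 1)).
Proof.
split; [exact is_series_fterm |].
destruct fser_remainder_bound as [C HC].
exists C, (exp 1). intros t Ht.
exists (fser_remainder t). split; [now apply HC |].
apply fser_eq_remainder. pose proof (exp_pos 1). lra.
Qed.
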